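(* Consider the distributed quantized weight-balancing algorithm described in the context on a strongly connected digraph with $N$ nodes, with step-size $\gamma(k)=2^{-n}$ for $2^n-1\le k\le 2^{n+1}-2$. For every $k\in\mathbb{Z}_+$ there exists $k_1\ge k$ such that $\Vert\boldsymbol{\epsilon}(k_1)\Vert_1<2N(N-1)\gamma(k_1)$.
   Context: $\mathcal{G}=(\mathcal{V},\mathcal{E})$, $\mathcal{V}=\{1,\dots,N\}$, no self-loops; $\mathcal{N}_i^-=\{j:(j,i)\in\mathcal{E}\}$, $\mathcal{N}_i^+=\{j:(i,j)\in\mathcal{E}\}$, $d_i^+=|\mathcal{N}_i^+|$. Algorithm: $a_{ij}(0)=1$ if $j\in\mathcal{N}_i^-$ and $0$ otherwise; $b_i(k)=\sum_{j\in\mathcal{N}_i^-}a_{ij}(k)-\sum_{j\in\mathcal{N}_i^+}a_{ji}(k)$; $n_i(k)=1$ if $b_i(k)\ge d_i^+\gamma(k)$, else $0$; $a_{ij}(k+1)=a_{ij}(k)+n_j(k)\gamma(k)$ for $j\in\mathcal{N}_i^-$. $\boldsymbol{\epsilon}(k)=(|b_i(k)|)_{i=1}^N$. *)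

From HB Require Import structures.
From mathcomp Require Import all_boot all_order all_algebra.
Set Implicit Arguments. Unset Strict Implicit. Unset Printing Implicit Defensive.
Import Order.TTheory GRing.Theory Num.Theory.
Local Open Scope ring_scope.

(* Digraph on nodes 'I_N given by an edge relation e : rel 'I_N,
   where  e j i  means  (j,i) \in E  (edge from j to i). *)

(* Step size: gamma(k) = 2^{-n} for 2^n - 1 <= k <= 2^{n+1} - 2,
   i.e. n = floor(log2 (k+1)). *)
Definition gamma (R : realFieldType) (k : nat) : R :=
  (2%:R ^- trunc_log 2 k.+1).

Definition outdeg (N : nat) (e : rel 'I_N) (i : 'I_N) : nat :=
  #|[set j | e i j]|.

Definition imbalance (R : realFieldType) (N : nat) (e : rel 'I_N)
  (a : 'I_N -> 'I_N -> R) (i : 'I_N) : R :=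
  \sum_(j | e j i) a i j - \sum_(j | e i j) a j i.

Definition nflag (R : realFieldType) (N : nat) (e : rel 'I_N)
  (a : 'I_N -> 'I_N -> R) (k : nat) (i : 'I_N) : R :=
  if (outdeg e i)%:R * gamma R k <= imbalance e a i then 1 else 0.

Fixpoint weights (R : realFieldType) (N : nat) (e : rel 'I_N) (k : nat)
  : 'I_N -> 'I_N -> R :=
  match k with
  | 0 => fun i j => if e j i then 1 else 0
  | k'.+1 => fun i j =>
      let a := weights R e k' in
      if e j i then a i j + nflag e a k' j * gamma R k' else a i j
  end.

Definition b (R : realFieldType) (N : nat) (e : rel 'I_N) (k : nat) (i : 'I_N) : R :=
  imbalance e (weights R e k) i.

Definition eps_norm1 (R : realFieldType) (N : nat) (e : rel 'I_N) (k : nat) : R :=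
  \sum_i `|b R e k i|.

Definition strongly_connected (N : nat) (e : rel 'I_N) : Prop :=
  forall i j : 'I_N, connect e i j.

(* The deficit D(t) = sum_i max(-b_i(t), 0) is half of ||eps(t)||_1 and never
   increases.  Imbalances are integer multiples of gamma(t), so D drops by at
   least gamma(t) whenever a negative node has a firing in-neighbour.
   Suppose ||eps(t)||_1 >= 2N(N-1)gamma(t) from time k on.  Then at every step
   some node fires and some node is negative.  In a window of constant step
   size in which no negative node is relieved, the negative nodes are frozen,
   and a node at distance d from a frozen node fires fewer than (2N+1)^d times:
   each of its firings is received by its out-neighbour, and a non-negative
   node absorbs at most about 2N receptions per firing of its own.  So such a
   window lasts at most L = N(2N+1)^N steps.  Cutting the phase of step size
   2^-n (which lasts 2^n steps) into windows of length 2^L, D drops by 2^-L per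
   phase, which contradicts D >= 0 after finitely many phases. *)

From HB Require Import structures.
From mathcomp Require Import all_boot all_order all_algebra zify ring lra.
From Stdlib Require Import Classical.
Import Order.TTheory GRing.Theory Num.Theory.
Local Open Scope ring_scope.
Set Implicit Arguments. Unset Strict Implicit. Unset Printing Implicit Defensive.

Lemma ler_descent_iter (R : numDomainType) (u : nat -> R) (f : nat -> nat) (d : R) m :
  (forall j, (j < m)%N -> u (f j.+1) <= u (f j) - d) -> u (f m) <= u (f 0%N) - d *+ m.
Proof.
elim: m => [|m IH] drop; first by rewrite mulr0n subr0.
apply: le_trans (drop _ (ltnSn m)) _.
by rewrite mulrSr opprD addrA lerD2r; apply: IH => j /leqW; apply: drop.
Qed.

Lemma norm_eq_add_twice_negpart (R : realDomainType) (x : R) :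
  `|x| = x + 2 * Num.max (- x) 0.
Proof.
case: (lerP 0 x) => [x_ge0|x_lt0].
  by rewrite ger0_norm // max_r ?oppr_le0 // mulr0 addr0.
by rewrite ltr0_norm // max_l ?oppr_ge0 ?(ltW x_lt0) //; ring.
Qed.

Lemma sum_norm_eq_twice_negpart (R : realDomainType) (I : finType) (x : I -> R) :
  \sum_i x i = 0 -> \sum_i `|x i| = 2 * \sum_i Num.max (- x i) 0.
Proof.
move=> sum0; under eq_bigr do rewrite norm_eq_add_twice_negpart.
by rewrite big_split /= sum0 add0r mulr_sumr.
Qed.

Lemma sum_norm_eq_twice_pospart (R : realDomainType) (I : finType) (x : I -> R) :
  \sum_i x i = 0 -> \sum_i `|x i| = 2 * \sum_i Num.max (x i) 0.
Proof.
move=> sum0; under eq_bigr do rewrite -normrN.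
rewrite sum_norm_eq_twice_negpart ?sumrN ?sum0 ?oppr0 //.
by under eq_bigr do rewrite opprK.
Qed.

Section StepSize.
Variable R : realFieldType.

Lemma gamma_gt0 t : 0 < gamma R t.
Proof. by rewrite invr_gt0 exprn_gt0 // ltr0n. Qed.

Lemma gamma_phase n t : (2 ^ n <= t.+1 < 2 ^ n.+1)%N -> gamma R t = 2%:R ^- n.
Proof. by move=> tn; rewrite /gamma (trunc_log_eq _ tn). Qed.

Definition on_grid t (x : R) := exists z : int, x = z%:~R * gamma R t.

Lemma on_gridD t x y : on_grid t x -> on_grid t y -> on_grid t (x + y).
Proof. by move=> [z ->] [w ->]; exists (z + w); rewrite intrD mulrDl. Qed.

Lemma on_gridN t x : on_grid t x -> on_grid t (- x).
Proof. by move=> [z ->]; exists (- z); rewrite intrN mulNr. Qed.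

Lemma on_grid_sum t (I : finType) (P : pred I) (F : I -> R) :
  (forall i, P i -> on_grid t (F i)) -> on_grid t (\sum_(i | P i) F i).
Proof.
move=> gridF; apply: (big_ind (on_grid t)) => //; last exact: on_gridD.
by exists 0; rewrite mul0r.
Qed.

(* Step sizes only ever get halved, so the grid gets finer. *)
Lemma on_grid_le t s x : (t <= s)%N -> on_grid t x -> on_grid s x.
Proof.
rewrite -ltnS => /(leq_trunc_log 2) /subnK ts [z ->]; rewrite /on_grid /gamma -{}ts.
set m := (_ - _)%N; exists (z * (2 ^ m)%:R); rewrite intrM mulrz_nat -mulrA.
by rewrite natrX exprD invfM mulVKf // expf_neq0 // pnatr_eq0.
Qed.

Lemma on_grid_le_neg t x : on_grid t x -> x < 0 -> x <= - gamma R t.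
Proof.
move=> [z ->]; rewrite pmulr_llt0 ?gamma_gt0 // ltrz0 => z_lt0.
rewrite -mulN1r ler_pM2r ?gamma_gt0 // -[-1 : R]/((-1 : int)%:~R) ler_int; lia.
Qed.

End StepSize.

Section Algorithm.
Variables (R : realFieldType) (N : nat) (e : rel 'I_N).

Local Notation gamma := (gamma R).
Local Notation b := (b R e).

Definition fires t i : bool := (outdeg e i)%:R * gamma t <= b t i.
Definition in_fires t i : nat := \sum_(j | e j i) fires t j.
Definition deficit t : R := \sum_i Num.max (- b t i) 0.

Lemma nflag_fires t i : nflag e (weights R e t) t i = (fires t i)%:R.
Proof. by rewrite /nflag /fires /b; case: ifP. Qed.

Lemma b_succ t i :
  b t.+1 i = b t i + gamma t * ((in_fires t i)%:R - (fires t i * outdeg e i)%:R).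
Proof.
rewrite /b /imbalance /= /in_fires natr_sum natrM.
under eq_bigr => j eji do rewrite eji nflag_fires.
under [X in _ - X]eq_bigr => j eij do rewrite eij nflag_fires.
rewrite !big_split /= sumr_const -mulr_suml /outdeg -cardsE mulr_natr -mulrnAl.
ring.
Qed.

Lemma weights_on_grid t i j : on_grid t (weights R e t i j).
Proof.
elim: t i j => [|t IH] i j /=.
  by exists (e j i)%:Z; rewrite /gamma trunc_log1 expr0 invr1 mulr1; case: (e j i).
apply: on_grid_le (leqnSn t) _; case: (e j i) => //.
apply: on_gridD => //; rewrite nflag_fires.
by exists (fires t j)%:Z; case: (fires t j); rewrite ?mul1r ?mul0r.
Qed.

Lemma b_on_grid t i : on_grid t (b t i).
Proof.
by apply: on_gridD; last apply: on_gridN; apply: on_grid_sum => j _;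
  apply: weights_on_grid.
Qed.

Lemma sum_b_eq0 t : \sum_i b t i = 0.
Proof.
rewrite /b /imbalance sumrB; apply/eqP; rewrite subr_eq0; apply/eqP.
under eq_bigr do rewrite big_mkcond.
under [RHS]eq_bigr do rewrite big_mkcond.
exact: exchange_big.
Qed.

Lemma eps_norm1_deficit t : eps_norm1 R e t = 2 * deficit t.
Proof. exact/sum_norm_eq_twice_negpart/sum_b_eq0. Qed.

Lemma neg_not_fires t i : b t i < 0 -> ~~ fires t i.
Proof.
move=> bi_lt0; rewrite /fires -ltNge; apply: lt_le_trans bi_lt0 _.
by rewrite mulr_ge0 // ltW // gamma_gt0.
Qed.

Lemma deficit_ge0 t : 0 <= deficit t.
Proof. by apply: sumr_ge0 => i _; rewrite le_max lexx orbT. Qed.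

Lemma negpart_b_succ_le t i : Num.max (- b t.+1 i) 0 <= Num.max (- b t i) 0.
Proof.
have gamma_ge0 := ltW (gamma_gt0 R t).
have in_ge0 : 0 <= gamma t * (in_fires t i)%:R by rewrite mulr_ge0.
rewrite ge_max [0 <= _]le_max lexx orbT andbT le_max b_succ.
case: (boolP (fires t i)) => [fi|nfi]; last by rewrite mul0n subr0 lerN2 lerDl in_ge0.
apply/orP; right; move: fi; rewrite /fires mul1n oppr_le0 => fi.
lra.
Qed.

Lemma deficit_succ_le t : deficit t.+1 <= deficit t.
Proof. by apply: ler_sum => i _; apply: negpart_b_succ_le. Qed.

Lemma deficit_le t s : (t <= s)%N -> deficit s <= deficit t.
Proof.
move=> /subnK <-; elim: (s - t)%N => [|n IH] //.
by rewrite addSn; apply: le_trans IH; apply: deficit_succ_le.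
Qed.

(* An imbalance is a multiple of the step size, so a negative node that
   receives anything recovers at least [gamma t] of its deficit. *)
Lemma deficit_drop t i j :
  e j i -> b t i < 0 -> fires t j -> deficit t.+1 <= deficit t - gamma t.
Proof.
move=> eji bi_lt0 fj.
have gamma_gt0 := gamma_gt0 R t.
have nfi := neg_not_fires bi_lt0.
have in_ge1 : (1 <= in_fires t i)%N by rewrite /in_fires (bigD1 j) //= fj.
have bi_le := on_grid_le_neg (b_on_grid t i) bi_lt0.
have drop_i : Num.max (- b t.+1 i) 0 <= Num.max (- b t i) 0 - gamma t.
  rewrite b_succ (negbTE nfi) mul0n subr0 [Num.max (- b t i) 0]max_l; last by lra.
  rewrite ge_max; apply/andP; split; last by lra.
  have : gamma t <= gamma t * (in_fires t i)%:R by rewrite ler_peMr ?ler1n // ltW.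
  lra.
rewrite /deficit (bigD1 i) //= [X in _ <= X - _](bigD1 i) //=.
have : \sum_(k | k != i) Num.max (- b t.+1 k) 0
       <= \sum_(k | k != i) Num.max (- b t k) 0.
  by apply: ler_sum => k _; apply: negpart_b_succ_le.
lra.
Qed.

Lemma deficit0_le : deficit 0 <= (N * N)%:R.
Proof.
apply: le_trans (_ : \sum_(i < N) (N%:R : R) <= _); last first.
  by rewrite sumr_const card_ord natrM mulr_natr.
apply: ler_sum => i _.
rewrite ge_max ler0n andbT /b /imbalance opprB lerBlDr.
apply: ler_wpDr; first by apply: sumr_ge0 => j _ /=; case: (e j i).
apply: le_trans (_ : \sum_(j | e i j) (1 : R) <= _).
  by apply: ler_sum => j _ /=; case: (e i j).
by rewrite sumr_const ler_nat -[X in (_ <= X)%N]card_ord max_card.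
Qed.

Hypothesis e_irr : irreflexive e.
Hypothesis e_sc : strongly_connected e.

Lemma outdeg_le i : (outdeg e i <= N.-1)%N.
Proof.
rewrite /outdeg -[X in (_ <= X.-1)%N]card_ord -(cardC1 i).
apply/subset_leq_card/subsetP => j; rewrite !inE.
by apply: contraTneq => ->; rewrite e_irr.
Qed.

Lemma eps_norm1_lt_of_silent t : (1 < N)%N -> (forall i, ~~ fires t i) ->
  eps_norm1 R e t < (2 * N * (N - 1))%:R * gamma t.
Proof.
move=> N_gt1 silent.
have gamma_gt0 := gamma_gt0 R t.
have Nm1_gt0 : 0 < (N.-1)%:R :> R by rewrite ltr0n; lia.
have pospart_lt i : Num.max (b t i) 0 < (N.-1)%:R * gamma t.
  rewrite gt_max mulr_gt0 // andbT.
  move: (silent i); rewrite /fires -ltNge => /lt_le_trans; apply.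
  by rewrite ler_pM2r // ler_nat outdeg_le.
rewrite /eps_norm1 sum_norm_eq_twice_pospart ?sum_b_eq0 //.
have -> : (2 * N * (N - 1))%:R * gamma t = 2 * \sum_(i < N) (N.-1)%:R * gamma t.
  by rewrite sumr_const card_ord subn1 !natrM -mulr_natl; ring.
rewrite ltr_pM2l ?ltr0n //; apply: ltr_sum => //.
by apply/hasP; exists (Ordinal (ltnW N_gt1)); rewrite ?mem_index_enum.
Qed.

Lemma in_fires_le t i : (in_fires t i <= N)%N.
Proof.
apply: leq_trans (_ : \sum_(j | e j i) 1 <= N)%N.
  by apply: leq_sum => j _; apply: leq_b1.
by rewrite sum1_card -[X in (_ <= X)%N]card_ord max_card.
Qed.

Definition fire_count t0 i s : nat := \sum_(u < s) fires (t0 + u) i.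
Definition in_fire_count t0 i s : nat := \sum_(j | e j i) fire_count t0 j s.

Lemma fire_countS t0 i s :
  fire_count t0 i s.+1 = (fire_count t0 i s + fires (t0 + s) i)%N.
Proof. by rewrite /fire_count big_ord_recr. Qed.

Lemma in_fire_countS t0 i s :
  in_fire_count t0 i s.+1 = (in_fire_count t0 i s + in_fires (t0 + s) i)%N.
Proof.
rewrite /in_fire_count /in_fires -big_split.
by apply: eq_bigr => j _; rewrite fire_countS.
Qed.

Definition stall_bound : nat := N * (2 * N).+1 ^ N.

Section Stall.
Variables t0 T : nat.
Hypothesis gamma_const : forall s, (s < T)%N -> gamma (t0 + s) = gamma t0.
Hypothesis no_relief : forall s i j,
  (s < T)%N -> e j i -> b (t0 + s) i < 0 -> ~~ fires (t0 + s) j.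

Lemma b_window i s : (s <= T)%N -> b (t0 + s) i =
  b t0 i + gamma t0 * ((in_fire_count t0 i s)%:R - (fire_count t0 i s * outdeg e i)%:R).
Proof.
elim: s => [|s IH] sT.
  rewrite addn0 /in_fire_count /fire_count big_ord0 big1 => [|j _]; last exact: big_ord0.
  by rewrite subrr mulr0 addr0.
rewrite addnS b_succ IH ?(ltnW sT) // gamma_const // in_fire_countS fire_countS.
rewrite mulnDl !natrD; ring.
Qed.

Lemma b_neg_const i s : b t0 i < 0 -> (s <= T)%N -> b (t0 + s) i = b t0 i.
Proof.
move=> bi_lt0; elim: s => [|s IH] sT; first by rewrite addn0.
have bs_lt0 : b (t0 + s) i < 0 by rewrite IH // ltnW.
have no_in : in_fires (t0 + s) i = 0%N.
  by rewrite /in_fires big1 // => j eji; rewrite (negbTE (no_relief sT eji bs_lt0)).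
rewrite addnS b_succ (negbTE (neg_not_fires bs_lt0)) no_in mul0n subrr.
by rewrite mulr0 addr0 IH // ltnW.
Qed.

Lemma fire_count_neg i : b t0 i < 0 -> fire_count t0 i T = 0%N.
Proof.
move=> bi_lt0; rewrite /fire_count big1 // => u _; apply/eqP; rewrite eqb0.
by apply: neg_not_fires; rewrite b_neg_const // ltnW.
Qed.

Lemma fire_count_pred_neg i j : e i j -> b t0 j < 0 -> fire_count t0 i T = 0%N.
Proof.
move=> eij bj_lt0; rewrite /fire_count big1 // => u _; apply/eqP; rewrite eqb0.
by apply: no_relief (ltn_ord u) eij _; rewrite b_neg_const // ltnW.
Qed.

Lemma in_fire_count_le i s : 0 <= b t0 i -> (s <= T)%N ->
  (in_fire_count t0 i s <= (fire_count t0 i s).+1 * (outdeg e i + N))%N.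
Proof.
move=> bi_ge0; elim: s => [|s IH] sT.
  by rewrite /in_fire_count big1 // => j _; rewrite /fire_count big_ord0.
have := IH (ltnW sT); have := in_fires_le (t0 + s) i.
rewrite in_fire_countS fire_countS.
case: (boolP (fires (t0 + s) i)) => [_|nfi]; first by nia.
(* Before a non-firing step the imbalance is below [outdeg * gamma], which
   caps what has been received so far. *)
have : ((in_fire_count t0 i s)%:R : R) < ((fire_count t0 i s).+1 * outdeg e i)%:R.
  move: nfi; rewrite /fires -ltNge b_window ?(ltnW sT) // gamma_const // => b_lt.
  have gamma_gt0 := gamma_gt0 R t0.
  rewrite -(ltr_pM2l gamma_gt0) mulSn natrD mulrDr.
  lra.
rewrite ltr_nat; nia.
Qed.

Lemma fire_count_path_lt i p :
  path e i p -> b t0 (last i p) < 0 -> (fire_count t0 i T < (2 * N).+1 ^ size p)%N.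
Proof.
elim: p i => [|j p IH] i /=; first by move=> _ /fire_count_neg ->.
move=> /andP[eij pj] last_lt0.
have [bj_lt0|bj_ge0] := ltP (b t0 j) 0.
  by rewrite (fire_count_pred_neg eij bj_lt0) expn_gt0.
have fc_le : (fire_count t0 i T <= in_fire_count t0 j T)%N.
  by rewrite /in_fire_count (bigD1 i) //= leq_addr.
have := in_fire_count_le bj_ge0 (leqnn T); have := IH j pj last_lt0.
have : (outdeg e j <= N)%N by rewrite /outdeg -[X in (_ <= X)%N]card_ord max_card.
rewrite expnS; nia.
Qed.

Lemma stall_le : (exists i0, b t0 i0 < 0) ->
  (forall s, (s < T)%N -> exists i, fires (t0 + s) i) -> (T <= stall_bound)%N.
Proof.
move=> [i0 bi0_lt0] busy.
have T_le : (T <= \sum_i fire_count t0 i T)%N.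
  rewrite /fire_count exchange_big /= -[X in (X <= _)%N]card_ord -sum1_card.
  apply: leq_sum => u _; have [i fi] := busy _ (ltn_ord u).
  by rewrite (bigD1 i) //= fi.
apply: leq_trans T_le _.
rewrite /stall_bound -[X in (_ <= X * _)%N]card_ord -sum_nat_const.
apply: leq_sum => i _; have /connectP[p pth last_p] := e_sc i i0.
rewrite last_p in bi0_lt0; case/shortenP: pth bi0_lt0 => p' pth' uniq_p' _ last_lt0.
apply/ltnW/(leq_trans (fire_count_path_lt pth' last_lt0))/leq_pexp2l => //.
by have := max_card (mem (i :: p')); rewrite card_ord (card_uniqP uniq_p') => /ltnW.
Qed.
End Stall.

Section Descent.
Variable k : nat.
Hypothesis N_gt1 : (1 < N)%N.
Hypothesis eps_large :
  forall t, (k <= t)%N -> (2 * N * (N - 1))%:R * gamma t <= eps_norm1 R e t.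

Lemma fires_of_large t : (k <= t)%N -> exists i, fires t i.
Proof.
move=> kt; case: (boolP [exists i, fires t i]) => [/existsP //|/existsPn silent].
by have := eps_norm1_lt_of_silent N_gt1 silent; rewrite ltNge eps_large.
Qed.

Lemma neg_of_large t : (k <= t)%N -> exists i, b t i < 0.
Proof.
move=> kt; case: (boolP [exists i, b t i < 0]) => [/existsP //|/existsPn nonneg].
have deficit0 : deficit t = 0.
  by rewrite /deficit big1 // => i _; rewrite max_r // oppr_le0 leNgt nonneg.
have := eps_large kt; rewrite eps_norm1_deficit deficit0 mulr0 leNgt.
by rewrite mulr_gt0 ?gamma_gt0 // ltr0n !muln_gt0 subn_gt0 N_gt1 (ltnW N_gt1).
Qed.

Lemma window_drop t c : (k <= t)%N -> (stall_bound < c)%N ->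
  (forall s, (s < c)%N -> gamma (t + s) = gamma t) ->
  deficit (t + c) <= deficit t - gamma t.
Proof.
move=> kt c_gt gamma_const.
case: (boolP [exists s : 'I_c, exists i, exists j,
                [&& e j i, b (t + s) i < 0 & fires (t + s) j]]).
  move=> /existsP[s /existsP[i /existsP[j /and3P[eji bi_lt0 fj]]]].
  have := deficit_drop eji bi_lt0 fj; rewrite gamma_const //.
  have := deficit_le (leq_addr s t).
  have : deficit (t + c) <= deficit (t + s).+1.
    by apply: deficit_le; rewrite -addnS leq_add2l.
  lra.
move=> /existsPn no_relief; exfalso.
have no_relief' s i j : (s < c)%N -> e j i -> b (t + s) i < 0 -> ~~ fires (t + s) j.
  move=> sc eji bi_lt0; have /existsPn/(_ i)/existsPn/(_ j) := no_relief (Ordinal sc).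
  by rewrite eji bi_lt0.
have busy s : (s < c)%N -> exists i, fires (t + s) i.
  by move=> _; apply: fires_of_large; apply: leq_trans kt (leq_addr _ _).
by have := stall_le gamma_const no_relief' (neg_of_large kt) busy; rewrite leqNgt c_gt.
Qed.

Lemma phase_drop n : (stall_bound <= n)%N -> (k <= 2 ^ n - 1)%N ->
  deficit (2 ^ n.+1 - 1) <= deficit (2 ^ n - 1) - 2%:R ^- stall_bound.
Proof.
set P := stall_bound; move=> /subnK <-; set q := (n - P)%N => kn.
have P_lt : (P < 2 ^ P)%N by apply: ltn_expl.
pose start j := (2 ^ (q + P) - 1 + j * 2 ^ P)%N.
have drop j : (j < 2 ^ q)%N ->
    deficit (start j.+1) <= deficit (start j) - 2%:R ^- (q + P).
  move=> jq; have jP : (j.+1 * 2 ^ P <= 2 ^ q * 2 ^ P)%N by rewrite leq_mul2r jq orbT.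
  have in_phase s : (s < 2 ^ P)%N -> gamma (start j + s) = 2%:R ^- (q + P).
    move=> sP; apply: gamma_phase; rewrite /start expnS expnD; move: jP; rewrite mulSn.
    lia.
  have kj : (k <= start j)%N by apply: leq_trans kn (leq_addr _ _).
  have gamma_start : gamma (start j) = 2%:R ^- (q + P).
    by rewrite -[start j]addn0 in_phase ?expn_gt0.
  have -> : start j.+1 = (start j + 2 ^ P)%N.
    by rewrite /start mulSn [(2 ^ P + _)%N]addnC addnA.
  rewrite -gamma_start; apply: window_drop kj P_lt _ => s sP.
  by rewrite in_phase.
have := ler_descent_iter drop.
have -> : (start (2 ^ q) = 2 ^ (q + P).+1 - 1)%N.
  by rewrite /start -expnD expnS; have := expn_gt0 2 (q + P); lia.
rewrite /start mul0n addn0 -[_ *+ 2 ^ q]mulr_natr natrX exprD invfM mulrAC.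
by rewrite mulVf ?mul1r // expf_neq0 // pnatr_eq0.
Qed.

Lemma phases_drop j :
  deficit (2 ^ (stall_bound + k + j) - 1)
  <= deficit (2 ^ (stall_bound + k) - 1) - 2%:R ^- stall_bound *+ j.
Proof.
have := @ler_descent_iter _ deficit (fun j => 2 ^ (stall_bound + k + j) - 1)%N.
rewrite addn0; apply=> i _.
rewrite addnS; apply: phase_drop; first by rewrite -addnA leq_addr.
have : (2 ^ k <= 2 ^ (stall_bound + k + i))%N by apply: leq_pexp2l => //; lia.
have := ltn_expl k (ltnSn 1); lia.
Qed.
End Descent.
End Algorithm.

Theorem lemma6 (R : realFieldType) (N : nat) (e : rel 'I_N)
  (hN : (2 <= N)%N) (hirr : irreflexive e) (hsc : strongly_connected e) :
  forall k : nat, exists k1 : nat, (k <= k1)%N /\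
    eps_norm1 R e k1 < (2 * N * (N - 1))%:R * gamma R k1.
Proof.
move=> k; apply: NNPP => no_k1.
have eps_large t : (k <= t)%N -> (2 * N * (N - 1))%:R * gamma R t <= eps_norm1 R e t.
  by move=> kt; rewrite leNgt; apply/negP => lt; apply: no_k1; exists t.
set P := stall_bound N; set m := ((N * N).+1 * 2 ^ P)%N.
have := phases_drop hirr hsc hN eps_large m.
have := deficit_ge0 R e (2 ^ (P + k + m) - 1).
have := deficit_le R e (leq0n (2 ^ (P + k) - 1)); have := deficit0_le R e.
have -> : 2%:R ^- P *+ m = (N * N).+1%:R :> R.
  rewrite /m mulnC mulrnA -[_ *+ 2 ^ P]mulr_natr natrX.
  by rewrite mulVf // expf_neq0 // pnatr_eq0.
rewrite mulrSr; lra.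
Qed.
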